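(* Let $M_i\subseteq B(H_i)$ and $N_i\subseteq B(K_i)$, $i=1,2$, be finite-dimensional von Neumann algebras on finite-dimensional Hilbert spaces with $M_1\cong M_2$ and $N_1\cong N_2$. Then there is a one-to-one correspondence between quantum multi-relations on the pair $(M_1,N_1)$ and quantum multi-relations on the pair $(M_2,N_2)$.
   Context: For finite-dimensional von Neumann algebras $M\subseteq B(H)$, $N\subseteq B(K)$, a quantum multi-relation on $(M,N)$ is a linear subspace $V\subseteq B(H\otimes K)$ such that (1) $V\subseteq B(H)\otimes N$; (2) $V$ is an $(M'\otimes1)$–$(M'\otimes1)$ bimodule, where $M'$ is the commutant of $M$ in $B(H)$; (3) $(1\otimes Z(N))V\subseteq V$, where $Z(N)=N\cap N'$ is the center of $N$. *)

(* complex numbers C = R[i] over R : realType,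
   B(C^n) = 'M[C]_n, H (x) K = C^(n*m) via mxtens (Kronecker product). *)
From HB Require Import structures.
From mathcomp Require Import all_boot all_algebra.
From mathcomp Require Import reals complex mxtens.
Set Implicit Arguments. Unset Strict Implicit. Unset Printing Implicit Defensive.
Import GRing.Theory Num.Theory.
Local Open Scope ring_scope.

Section Defs.
Variable R : realType.
Local Notation C := R[i].

Definition adjmx {n m : nat} (A : 'M[C]_(n, m)) : 'M[C]_(m, n) :=
  (map_mx Num.conj A)^T.

Definition is_vNa {n : nat} (M : {vspace 'M[C]_n}) : Prop :=
  [/\ (1%:M : 'M[C]_n) \in M,
      forall x y, x \in M -> y \in M -> x *m y \in M
    & forall x, x \in M -> adjmx x \in M].

Definition commutant {n : nat} (M : {vspace 'M[C]_n}) (a : 'M[C]_n) : Prop :=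
  forall x, x \in M -> a *m x = x *m a.

Definition center_vNa {n : nat} (N : {vspace 'M[C]_n}) (z : 'M[C]_n) : Prop :=
  z \in N /\ commutant N z.

(* The algebraic tensor product B(C^n) ⊗ N inside B(C^n ⊗ C^m),
   spanned by elementary tensors a ⊗ b with a ∈ B(C^n), b ∈ N. *)
Definition tens_full_left (n : nat) {m : nat} (N : {vspace 'M[C]_m})
  : {vspace 'M[C]_(n * m)} :=
  (\sum_(i < n) \sum_(j < n) \sum_(k < \dim N)
      <[(delta_mx i j : 'M[C]_n) *t (vbasis N)`_k]>)%VS.

Definition quantum_multi_relation {n m : nat}
  (M : {vspace 'M[C]_n}) (N : {vspace 'M[C]_m}) (V : {vspace 'M[C]_(n * m)})
  : Prop :=
  [/\ (V <= tens_full_left n N)%VS,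
      forall a v, commutant M a -> v \in V ->
        (a *t (1%:M : 'M[C]_m)) *m v \in V /\ v *m (a *t (1%:M : 'M[C]_m)) \in V
    & forall z v, center_vNa N z -> v \in V ->
        ((1%:M : 'M[C]_n) *t z) *m v \in V].

Definition vNa_iso {n1 n2 : nat}
  (M1 : {vspace 'M[C]_n1}) (M2 : {vspace 'M[C]_n2}) : Prop :=
  exists f : 'M[C]_n1 -> 'M[C]_n2,
    (forall x, x \in M1 -> f x \in M2) /\
    (forall y, y \in M2 -> exists2 x, x \in M1 & f x = y) /\
    {in M1 &, injective f} /\
    (forall a x y, x \in M1 -> y \in M1 -> f (a *: x + y) = a *: f x + f y) /\
    f 1%:M = 1%:M /\
    (forall x y, x \in M1 -> y \in M1 -> f (x *m y) = f x *m f y) /\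
    (forall x, x \in M1 -> f (adjmx x) = adjmx (f x)).

End Defs.

From HB Require Import structures.
From mathcomp Require Import all_boot all_algebra.
From mathcomp Require Import reals complex mxtens.
From Stdlib Require Import ProofIrrelevance.
Set Implicit Arguments. Unset Strict Implicit. Unset Printing Implicit Defensive.
Import GRing.Theory Num.Theory.
Local Open Scope ring_scope.

(* Along N1 ~ N2, via psi, a
   relation V <= B(C^p) (x) N1 is mapped blockwise by id (x) psi; since psi is
   multiplicative and maps Z(N1) onto Z(N2), the defining conditions survive.
   Along M1 ~ M2, via phi, one uses the space T of intertwiners, T x = phi(x) T
   for x in M1, and sends V to {w | (t^* (x) 1) w (s (x) 1) \in V for t, s in T}.
   The same construction for phi^-1, whose intertwiners are the adjoints t^*,
   inverts it as soon as 1 = \sum_i t_i^* s_i for some t_i, s_i in T, on both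
   sides.  Such a resolution of the identity comes from twirling the matrix
   units, X |-> \sum_k phi(e_k) X e_k^* over an orthonormal basis (e_k) of M1,
   and normalising by the inverse of their Gram operator, which is invertible
   because phi is injective. *)

Lemma exists_bij_sig (A B : Type) (P : A -> Prop) (Q : B -> Prop)
    (f : A -> B) (g : B -> A) :
  (forall a, P a -> Q (f a)) -> (forall b, Q b -> P (g b)) ->
  (forall a, P a -> g (f a) = a) -> (forall b, Q b -> f (g b) = b) ->
  exists h : {a | P a} -> {b | Q b}, bijective h.
Proof.
move=> PQf QPg fK gK.
exists (fun a => exist Q (f (sval a)) (PQf _ (svalP a))).
exists (fun b => exist P (g (sval b)) (QPg _ (svalP b))).
  move=> [a Pa] /=; move: (QPg _ _); rewrite fK // => Pa'.
  by rewrite (proof_irrelevance _ Pa' Pa).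
move=> [b Qb] /=; move: (PQf _ _); rewrite gK // => Qb'.
by rewrite (proof_irrelevance _ Qb' Qb).
Qed.

Section QuantumMultiRelations.
Variable R : realType.
Local Notation C := R[i].

(** * Adjoints, amplifications and tensor blocks *)

Lemma adjmxK n m (A : 'M[C]_(n, m)) : adjmx (adjmx A) = A.
Proof. by apply/matrixP=> i j; rewrite !mxE conjCK. Qed.

Lemma adjmxM n m p (A : 'M[C]_(n, m)) (B : 'M[C]_(m, p)) :
  adjmx (A *m B) = adjmx B *m adjmx A.
Proof. by rewrite /adjmx map_mxM trmx_mul. Qed.

Lemma adjmx1 n : adjmx (1%:M : 'M[C]_n) = 1%:M.
Proof. by rewrite /adjmx map_mx1 trmx1. Qed.

Lemma adjmxZ n m (c : C) (A : 'M[C]_(n, m)) :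
  adjmx (c *: A) = Num.conj c *: adjmx A.
Proof. by apply/matrixP=> i j; rewrite !mxE rmorphM. Qed.

Lemma adjmxT m n p q (A : 'M[C]_(m, n)) (B : 'M[C]_(p, q)) :
  adjmx (A *t B) = adjmx A *t adjmx B.
Proof. by rewrite /adjmx map_mxT trmx_tens. Qed.

Fact adjmx_is_zmod_morphism n m : zmod_morphism (@adjmx R n m).
Proof. by move=> A B; rewrite /adjmx !raddfB. Qed.
HB.instance Definition _ n m :=
  GRing.isZmodMorphism.Build _ _ (@adjmx R n m) (@adjmx_is_zmod_morphism n m).

Fact tensmx_is_linear m n p q (A : 'M[C]_(m, n)) : linear (@tensmx C m n p q A).
Proof. by move=> a B B'; apply/matrixP=> x y; rewrite !mxE mulrDr mulrCA. Qed.
HB.instance Definition _ m n p q A :=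
  GRing.isLinear.Build C _ _ _ (@tensmx C m n p q A) (tensmx_is_linear A).

Lemma big_mxtens p m (F : 'I_(p * m) -> C) :
  \sum_t F t = \sum_(k < p) \sum_(l < m) F (mxtens_index (k, l)).
Proof.
rewrite pair_big /= (reindex (@mxtens_index p m)) /=; last first.
  by exists (@mxtens_unindex p m) => x _; rewrite ?mxtens_indexK ?mxtens_unindexK.
by apply: eq_bigr => -[k l].
Qed.

Lemma sum_mx1l n (x : 'I_n) (g : 'I_n -> C) :
  \sum_l (1%:M : 'M[C]_n) x l * g l = g x.
Proof.
rewrite (bigD1 x) //= big1 => [|l nxl]; first by rewrite mxE eqxx mul1r addr0.
by rewrite mxE eq_sym (negbTE nxl) mul0r.
Qed.

Lemma sum_mx1r n (x : 'I_n) (g : 'I_n -> C) :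
  \sum_l g l * (1%:M : 'M[C]_n) l x = g x.
Proof.
by rewrite -(sum_mx1l x); apply: eq_bigr => l _; rewrite mulrC !mxE eq_sym.
Qed.

Section TensorBlocks.
Variable m : nat.

(* Block (i, j), for the Kronecker convention mxtens_index (i, k) ~ e_i (x) e_k. *)
Definition tblock p q (i : 'I_p) (j : 'I_q) (v : 'M[C]_(p * m, q * m)) : 'M[C]_m :=
  \matrix_(k, l) v (mxtens_index (i, k)) (mxtens_index (j, l)).

Fact tblock_is_linear p q i j : linear (@tblock p q i j).
Proof. by move=> a v w; apply/matrixP=> k l; rewrite !mxE. Qed.
HB.instance Definition _ p q i j :=
  GRing.isLinear.Build C _ _ _ (@tblock p q i j) (tblock_is_linear i j).

Lemma tblock_tens p q i j (A : 'M[C]_(p, q)) (B : 'M[C]_m) :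
  tblock i j (A *t B) = A i j *: B.
Proof. by apply/matrixP=> k l; rewrite mxE tensmxE !mxE. Qed.

Lemma eq_tblock p q (v w : 'M[C]_(p * m, q * m)) :
  (forall i j, tblock i j v = tblock i j w) -> v = w.
Proof.
move=> eq_vw; apply/matrixP=> x y.
case: (mxtens_indexP x) => i k; case: (mxtens_indexP y) => j l.
by have /matrixP/(_ k l) := eq_vw i j; rewrite !mxE.
Qed.

Lemma tblock_sum_delta p q (Y : 'I_p -> 'I_q -> 'M[C]_m) a b :
  tblock a b (\sum_i \sum_j delta_mx i j *t Y i j) = Y a b.
Proof.
rewrite linear_sum (bigD1 a) //= [X in _ + X]big1 ?addr0 => [|i nai].
  rewrite linear_sum (bigD1 b) //= [X in _ + X]big1 ?addr0 => [|j nbj].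
    by rewrite tblock_tens mxE !eqxx scale1r.
  by rewrite tblock_tens mxE eqxx eq_sym (negbTE nbj) scale0r.
rewrite linear_sum big1 // => j _ /=.
by rewrite tblock_tens mxE eq_sym (negbTE nai) scale0r.
Qed.

Lemma tblock_decomp p q (v : 'M[C]_(p * m, q * m)) :
  v = \sum_i \sum_j delta_mx i j *t tblock i j v.
Proof. by apply: eq_tblock => a b; rewrite tblock_sum_delta. Qed.

Definition ampl p q (A : 'M[C]_(p, q)) : 'M[C]_(p * m, q * m) := A *t 1%:M.

Fact ampl_is_linear p q : linear (@ampl p q).
Proof. by move=> a A B; apply/matrixP=> x y; rewrite !mxE mulrDl mulrA. Qed.
HB.instance Definition _ p q :=
  GRing.isLinear.Build C _ _ _ (@ampl p q) (@ampl_is_linear p q).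

Lemma amplM p q r (A : 'M[C]_(p, q)) (B : 'M[C]_(q, r)) :
  ampl A *m ampl B = ampl (A *m B).
Proof. by rewrite /ampl tensmx_mul mul1mx. Qed.

Lemma ampl1 p : ampl (1%:M : 'M[C]_p) = 1%:M.
Proof.
apply/matrixP=> x y.
case: (mxtens_indexP x) => i k; case: (mxtens_indexP y) => j l.
rewrite tensmxE !mxE (can_eq (@mxtens_indexK p m)) xpair_eqE.
by rewrite -natrM mulnb.
Qed.

Lemma big_amplM p q r (I : finType) (P : I -> 'M[C]_(p, q)) (Q : I -> 'M[C]_(q, r)) :
  \sum_i ampl (P i) *m ampl (Q i) = ampl (\sum_i P i *m Q i).
Proof. by rewrite linear_sum; apply: eq_bigr => i _; rewrite amplM. Qed.

Lemma adjmx_ampl p q (A : 'M[C]_(p, q)) : adjmx (ampl A) = ampl (adjmx A).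
Proof. by rewrite /ampl adjmxT adjmx1. Qed.

Lemma ampl_tens1mx_comm p q (A : 'M[C]_(p, q)) (z : 'M[C]_m) :
  (1%:M *t z) *m ampl A = ampl A *m (1%:M *t z).
Proof. by rewrite /ampl !tensmx_mul !mul1mx !mulmx1. Qed.

Lemma tblock_ampl_mull p1 p2 q (A : 'M[C]_(p2, p1)) (v : 'M[C]_(p1 * m, q * m)) i j :
  tblock i j (ampl A *m v) = \sum_k A i k *: tblock k j v.
Proof.
apply/matrixP=> x y; rewrite !mxE summxE big_mxtens.
apply: eq_bigr => k _; rewrite !mxE.
under eq_bigr do rewrite tensmxE -mulrA.
by rewrite -big_distrr /= sum_mx1l.
Qed.

Lemma tblock_ampl_mulr p q1 q2 (B : 'M[C]_(q1, q2)) (v : 'M[C]_(p * m, q1 * m)) i j :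
  tblock i j (v *m ampl B) = \sum_k B k j *: tblock i k v.
Proof.
apply/matrixP=> x y; rewrite !mxE summxE big_mxtens.
apply: eq_bigr => k _; rewrite !mxE.
under eq_bigr do rewrite tensmxE mulrCA.
by rewrite -big_distrr /= sum_mx1r.
Qed.

Lemma tblock_tens1mx_mull p q (z : 'M[C]_m) (v : 'M[C]_(p * m, q * m)) i j :
  tblock i j ((1%:M *t z) *m v) = z *m tblock i j v.
Proof.
apply/matrixP=> x y; rewrite !mxE big_mxtens.
rewrite (bigD1 i) //= [X in _ + X]big1 ?addr0 => [|k nik]; last first.
  by rewrite big1 // => l _; rewrite tensmxE !mxE eq_sym (negbTE nik) !mul0r.
by apply: eq_bigr => l _; rewrite tensmxE !mxE eqxx mul1r.
Qed.

Lemma tens_full_leftP p (N : {vspace 'M[C]_m}) (v : 'M[C]_(p * m)) :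
  reflect (forall i j, tblock i j v \in N) (v \in tens_full_left p N).
Proof.
apply: (iffP idP) => [/memv_sumP [v_ Nv ->] i j | Nv].
  rewrite linear_sum memv_suml // => a _.
  have /memv_sumP [v_a Nva ->] := Nv a isT; rewrite linear_sum memv_suml // => b _.
  have /memv_sumP [v_ab Nvab ->] := Nva b isT; rewrite linear_sum memv_suml // => c _.
  have /vlineP [k ->] := Nvab c isT.
  by rewrite linearZ /= tblock_tens !memvZ // vbasis_mem ?mem_nth ?size_tuple.
rewrite (tblock_decomp v) memv_sumr // => i _; rewrite memv_sumr // => j _.
rewrite (coord_vbasis (Nv i j)) linear_sum memv_sumr // => k _.
by rewrite linearZ memvZ ?memv_line.
Qed.

Lemma tens_full_left_ampl p q (N : {vspace 'M[C]_m}) (A : 'M[C]_(p, q))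
    (B : 'M[C]_(q, p)) w :
  w \in tens_full_left q N -> ampl A *m w *m ampl B \in tens_full_left p N.
Proof.
move=> /tens_full_leftP Nw; apply/tens_full_leftP => i j.
rewrite tblock_ampl_mulr memv_suml // => k _; rewrite memvZ // tblock_ampl_mull.
by rewrite memv_suml // => l _; rewrite memvZ.
Qed.

Lemma tens_full_left_ampl_mull p (N : {vspace 'M[C]_m}) (A : 'M[C]_p) w :
  w \in tens_full_left p N -> ampl A *m w \in tens_full_left p N.
Proof. by move=> Nw; rewrite -[_ *m w]mulmx1 -ampl1 tens_full_left_ampl. Qed.

Lemma tens_full_left_ampl_mulr p (N : {vspace 'M[C]_m}) (A : 'M[C]_p) w :
  w \in tens_full_left p N -> w *m ampl A \in tens_full_left p N.
Proof. by move=> Nw; rewrite -[w]mul1mx -ampl1 tens_full_left_ampl. Qed.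

Lemma tens_full_left_tens1mx_mull p (N : {vspace 'M[C]_m}) z w :
  (forall x y, x \in N -> y \in N -> x *m y \in N) -> z \in N ->
  w \in tens_full_left p N -> ((1%:M : 'M[C]_p) *t z) *m w \in tens_full_left p N.
Proof.
move=> mulN Nz /tens_full_leftP Nw; apply/tens_full_leftP => i j.
by rewrite tblock_tens1mx_mull mulN.
Qed.

End TensorBlocks.

(** * Star-isomorphisms *)

Section LinearExtension.
Variables (vT wT : vectType C).

Definition linear_on (U : {vspace vT}) (f : vT -> wT) :=
  forall a, {in U &, forall x y, f (a *: x + y) = a *: f x + f y}.

(* Agrees with f on U when f is linear there (lin_extE); off U it is junk. *)
Definition lin_ext (U : {vspace vT}) (f : vT -> wT) (x : vT) : wT :=
  \sum_(k < \dim U) coord (vbasis U) k (projv U x) *: f (vbasis U)`_k.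

Fact lin_ext_is_linear U f : linear (lin_ext U f).
Proof.
move=> a x y; rewrite /lin_ext scaler_sumr -big_split; apply: eq_bigr => k _.
by rewrite !linearP /= scalerDl scalerA.
Qed.
HB.instance Definition _ U f :=
  GRing.isLinear.Build C vT wT *:%R (lin_ext U f) (lin_ext_is_linear U f).

Lemma lin_ext_projv U f x : lin_ext U f (projv U x) = lin_ext U f x.
Proof. by rewrite /lin_ext projv_proj. Qed.

Lemma linear_on_sum U f I (r : seq I) (P : pred I) (c : I -> C) (x : I -> vT) :
  linear_on U f -> (forall i, x i \in U) ->
  f (\sum_(i <- r | P i) c i *: x i) = \sum_(i <- r | P i) c i *: f (x i).
Proof.
move=> linf Ux; have f0 : f 0 = 0.
  have := linf 1 0 0 (mem0v U) (mem0v U); rewrite !scale1r addr0 => /eqP.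
  by rewrite -subr_eq0 opprD addrA subrr sub0r oppr_eq0 => /eqP.
elim: r => [|a r IHr]; first by rewrite !big_nil.
rewrite !big_cons; case: (P a) => //.
by rewrite linf ?IHr ?Ux // memv_suml // => i _; rewrite memvZ.
Qed.

Lemma lin_extE U f : linear_on U f -> {in U, lin_ext U f =1 f}.
Proof.
move=> linf x Ux; rewrite /lin_ext projv_id // {2}(coord_vbasis Ux).
rewrite (linear_on_sum _ _ _ linf) // => k.
by rewrite vbasis_mem ?mem_nth ?size_tuple.
Qed.

End LinearExtension.

Record star_iso n1 n2 (M1 : {vspace 'M[C]_n1}) (M2 : {vspace 'M[C]_n2})
    (f : 'Hom('M[C]_n1, 'M[C]_n2)) (g : 'Hom('M[C]_n2, 'M[C]_n1)) : Prop :=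
  StarIso {
    star_iso_mem : {in M1, forall x, f x \in M2};
    star_iso_inv_mem : {in M2, forall y, g y \in M1};
    star_isoK : {in M1, cancel f g};
    star_iso_invK : {in M2, cancel g f};
    star_isoM : {in M1 &, {morph f : x y / x *m y}};
    star_iso_adj : {in M1, {morph f : x / adjmx x}} }.

Section StarIsomorphisms.
Variables (n1 n2 : nat) (M1 : {vspace 'M[C]_n1}) (M2 : {vspace 'M[C]_n2}).
Hypothesis vNaM1 : is_vNa M1.

Lemma star_iso_sym f g : star_iso M1 M2 f g -> star_iso M2 M1 g f.
Proof.
have [_ mulM1 adjM1] := vNaM1.
case=> fM gM fK gK fmul fadj; split=> // [y1 y2 My1 My2 | y My].
  by rewrite -{1}(gK y1) // -{1}(gK y2) // -fmul ?gM // fK ?mulM1 ?gM.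
by rewrite -{1}(gK y) // -fadj ?gM // fK ?adjM1 ?gM.
Qed.

Lemma star_iso_center f g z :
  star_iso M1 M2 f g -> center_vNa M2 z -> center_vNa M1 (g z).
Proof.
move=> iso [M2z cz]; have [fM gM fK _ _ _] := iso.
have [_ _ _ _ gmul _] := star_iso_sym iso.
split=> [|x M1x]; first exact: gM.
by rewrite -{1}(fK x) // -{2}(fK x) // -!gmul ?fM // cz ?fM.
Qed.

Lemma vNa_iso_star_iso : vNa_iso M1 M2 -> exists f g, star_iso M1 M2 f g.
Proof.
have [_ mulM1 adjM1] := vNaM1.
case=> f0 [f0M [f0onto [f0inj [f0lin [_ [f0mul f0adj]]]]]].
(* f factors through projv M1, so projv M1 \o f^-1 is still a right inverse of f. *)
pose f := linfun (lin_ext M1 f0); pose g := (projv M1 \o f^-1)%VF.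
have fE : {in M1, f =1 f0} by move=> x M1x; rewrite lfunE /= (lin_extE f0lin).
have gM : {in M2, forall y, g y \in M1} by move=> y _; rewrite comp_lfunE memv_proj.
have gK : {in M2, cancel g f}.
  move=> _ /f0onto [x M1x <-].
  rewrite comp_lfunE !lfunE /= lin_ext_projv -lfunE limg_lfunVK //.
  by rewrite -fE // memv_img ?memvf.
have fK : {in M1, cancel f g}.
  move=> x M1x; have M2fx : f x \in M2 by rewrite fE ?f0M.
  by apply: f0inj; rewrite ?gM // -!fE ?gM ?gK.
exists f, g; split=> // [x M1x | x y M1x M1y | x M1x].
- by rewrite fE ?f0M.
- by rewrite !fE ?f0mul ?mulM1.
- by rewrite !fE ?f0adj ?adjM1.
Qed.

End StarIsomorphisms.

(** * Transport along an isomorphism of the second algebras *)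

Section IdTensor.
Variables (p m1 m2 : nat) (psi : 'Hom('M[C]_m1, 'M[C]_m2)).

Definition id_tens (v : 'M[C]_(p * m1)) : 'M[C]_(p * m2) :=
  \sum_i \sum_j delta_mx i j *t psi (tblock i j v).

Fact id_tens_is_linear : linear id_tens.
Proof.
move=> a v w; rewrite /id_tens scaler_sumr -big_split; apply: eq_bigr => i _.
by rewrite scaler_sumr -big_split; apply: eq_bigr => j _; rewrite !linearP.
Qed.
HB.instance Definition _ :=
  GRing.isLinear.Build C _ _ _ id_tens id_tens_is_linear.

Lemma tblock_id_tens v i j : tblock i j (id_tens v) = psi (tblock i j v).
Proof. exact: tblock_sum_delta. Qed.

Lemma id_tens_ampl_mull (A : 'M[C]_p) v :
  id_tens (ampl m1 A *m v) = ampl m2 A *m id_tens v.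
Proof.
apply: eq_tblock => i j; rewrite tblock_id_tens !tblock_ampl_mull linear_sum.
by apply: eq_bigr => k _; rewrite linearZ tblock_id_tens.
Qed.

Lemma id_tens_ampl_mulr (A : 'M[C]_p) v :
  id_tens (v *m ampl m1 A) = id_tens v *m ampl m2 A.
Proof.
apply: eq_tblock => i j; rewrite tblock_id_tens !tblock_ampl_mulr linear_sum.
by apply: eq_bigr => k _; rewrite linearZ tblock_id_tens.
Qed.

Lemma id_tens_tens1mx_mull (N : {vspace 'M[C]_m1}) z v :
  {in N &, {morph psi : x y / x *m y}} -> z \in N -> v \in tens_full_left p N ->
  id_tens ((1%:M *t z) *m v) = (1%:M *t psi z) *m id_tens v.
Proof.
move=> psiM Nz /tens_full_leftP Nv; apply: eq_tblock => i j.
by rewrite !(tblock_tens1mx_mull, tblock_id_tens) psiM.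
Qed.

End IdTensor.

Section TransportCodomain.
Variables (p m1 m2 : nat) (M : {vspace 'M[C]_p}).
Variables (N1 : {vspace 'M[C]_m1}) (N2 : {vspace 'M[C]_m2}).
Variables (psi : 'Hom('M[C]_m1, 'M[C]_m2)) (psi' : 'Hom('M[C]_m2, 'M[C]_m1)).
Hypotheses (vNaN1 : is_vNa N1) (iso : star_iso N1 N2 psi psi').

Definition id_tens_img (V : {vspace 'M[C]_(p * m1)}) : {vspace 'M[C]_(p * m2)} :=
  (linfun (@id_tens p m1 m2 psi) @: V)%VS.

Lemma id_tens_tens_full_left v :
  v \in tens_full_left p N1 -> id_tens psi v \in tens_full_left p N2.
Proof.
move=> /tens_full_leftP N1v; apply/tens_full_leftP => i j.
by rewrite tblock_id_tens (star_iso_mem iso).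
Qed.

Lemma id_tensK : {in tens_full_left p N1, cancel (id_tens psi) (id_tens psi')}.
Proof.
move=> v /tens_full_leftP N1v; apply: eq_tblock => i j.
by rewrite !tblock_id_tens (star_isoK iso).
Qed.

Lemma qmr_id_tens_img V :
  quantum_multi_relation M N1 V -> quantum_multi_relation M N2 (id_tens_img V).
Proof.
case=> V_tfl V_bimod V_center; split.
- apply/subvP => _ /memv_imgP [v Vv ->]; rewrite lfunE.
  exact/id_tens_tens_full_left/(subvP V_tfl).
- move=> a _ Ma /memv_imgP [v Vv ->]; rewrite lfunE.
  have [Vav Vva] := V_bimod a v Ma Vv.
  rewrite -[a *t _]/(ampl m2 a) -id_tens_ampl_mull -id_tens_ampl_mulr.
  by split; rewrite -lfunE memv_img.
- move=> z _ Z2z /memv_imgP [v Vv ->]; rewrite lfunE.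
  have Z1z' := star_iso_center vNaN1 iso Z2z.
  rewrite -(star_iso_invK iso (proj1 Z2z)) -(id_tens_tens1mx_mull _ (proj1 Z1z')).
    by rewrite -lfunE memv_img ?V_center.
  + exact: star_isoM iso.
  + exact: (subvP V_tfl).
Qed.

End TransportCodomain.

Lemma id_tens_imgK p m1 m2 (M : {vspace 'M[C]_p}) (N1 : {vspace 'M[C]_m1})
    (N2 : {vspace 'M[C]_m2}) psi psi' V :
  star_iso N1 N2 psi psi' -> quantum_multi_relation M N1 V ->
  id_tens_img psi' (id_tens_img psi V) = V.
Proof.
move=> iso [V_tfl _ _]; rewrite /id_tens_img -limg_comp -[RHS]lim1g.
apply: eq_in_limg => v Vv; rewrite comp_lfunE !lfunE /=.
by rewrite (id_tensK iso) ?(subvP V_tfl).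
Qed.

Lemma qmr_codomain_bij p m1 m2 (M : {vspace 'M[C]_p})
    (N1 : {vspace 'M[C]_m1}) (N2 : {vspace 'M[C]_m2}) :
  is_vNa N1 -> is_vNa N2 -> vNa_iso N1 N2 ->
  exists F : {V | quantum_multi_relation M N1 V} ->
             {W | quantum_multi_relation M N2 W}, bijective F.
Proof.
move=> vNaN1 vNaN2 /(vNa_iso_star_iso vNaN1) [psi [psi' iso]].
have iso' := star_iso_sym vNaN1 iso.
apply: (exists_bij_sig (f := id_tens_img psi) (g := id_tens_img psi')).
- exact: qmr_id_tens_img vNaN1 iso.
- exact: qmr_id_tens_img vNaN2 iso'.
- by move=> V; apply: id_tens_imgK iso.
- by move=> W; apply: id_tens_imgK iso'.
Qed.

(** * Transport along an isomorphism of the first algebras *)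

Section Intertwiners.
Variables (n1 n2 : nat) (M1 : {vspace 'M[C]_n1}) (phi : 'Hom('M[C]_n1, 'M[C]_n2)).

Definition intertwiners : {vspace 'M[C]_(n2, n1)} :=
  (\bigcap_(k < \dim M1) lker (linfun (mulmxr (vbasis M1)`_k)
                               - linfun (mulmx (phi (vbasis M1)`_k))))%VS.

Lemma intertwinersP T :
  reflect (forall x, x \in M1 -> T *m x = phi x *m T) (T \in intertwiners).
Proof.
have memT k : (T \in lker (linfun (mulmxr (vbasis M1)`_k)
                           - linfun (mulmx (phi (vbasis M1)`_k))))
              = (T *m (vbasis M1)`_k == phi (vbasis M1)`_k *m T).
  by rewrite memv_ker add_lfunE opp_lfunE !lfunE /= subr_eq0.
rewrite memvE; apply: (iffP subv_bigcapP) => [Tk x M1x | Tint k _].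
  rewrite (coord_vbasis M1x) mulmx_sumr linear_sum mulmx_suml.
  apply: eq_bigr => k _; rewrite -scalemxAr linearZ -scalemxAl; congr (_ *: _).
  by apply/eqP; rewrite -memT memvE Tk.
by rewrite -memvE memT Tint // vbasis_mem ?mem_nth ?size_tuple.
Qed.

Lemma intertwiner_adjmx_mul T x :
  is_vNa M1 -> {in M1, {morph phi : y / adjmx y}} ->
  T \in intertwiners -> x \in M1 -> adjmx T *m phi x = x *m adjmx T.
Proof.
move=> [_ _ adjM1] phi_adj /intertwinersP Tint M1x.
have := Tint _ (adjM1 _ M1x); rewrite phi_adj // => /(congr1 (@adjmx R _ _)).
by rewrite !adjmxM !adjmxK.
Qed.

End Intertwiners.

Definition resolves_identity p q (T : {vspace 'M[C]_(p, q)}) : Prop :=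
  exists (I : finType) (P Q : I -> 'M[C]_(p, q)),
    [/\ forall i, P i \in T, forall i, Q i \in T & \sum_i adjmx (P i) *m Q i = 1%:M].

Section IntertwinersOfIsomorphism.
Variables (n1 n2 : nat) (M1 : {vspace 'M[C]_n1}) (M2 : {vspace 'M[C]_n2}).
Variables (phi : 'Hom('M[C]_n1, 'M[C]_n2)) (phi' : 'Hom('M[C]_n2, 'M[C]_n1)).
Hypotheses (vNaM1 : is_vNa M1) (iso : star_iso M1 M2 phi phi').

Lemma adjmx_intertwiner T :
  T \in intertwiners M1 phi -> adjmx T \in intertwiners M2 phi'.
Proof.
move=> T_int; apply/intertwinersP => y M2y.
have [_ M1phi' _ phi'K _ _] := iso.
rewrite -{1}(phi'K y) //.
by rewrite (intertwiner_adjmx_mul vNaM1 (star_iso_adj iso) T_int) ?M1phi'.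
Qed.

Lemma mul_intertwiners_commutant T' T :
  T' \in intertwiners M2 phi' -> T \in intertwiners M1 phi -> commutant M1 (T' *m T).
Proof.
move=> /intertwinersP T'int /intertwinersP Tint x M1x.
by rewrite -mulmxA Tint // !mulmxA T'int ?(star_isoK iso) ?(star_iso_mem iso).
Qed.

Lemma intertwiner_mulr_commutant T' c :
  T' \in intertwiners M2 phi' -> commutant M2 c -> T' *m c \in intertwiners M2 phi'.
Proof.
move=> /intertwinersP T'int c_comm; apply/intertwinersP => y M2y.
by rewrite -mulmxA c_comm // !mulmxA T'int.
Qed.

End IntertwinersOfIsomorphism.

Section TransportDomain.
Variables (n1 n2 m : nat) (M1 : {vspace 'M[C]_n1}) (N : {vspace 'M[C]_m}).
Variable phi : 'Hom('M[C]_n1, 'M[C]_n2).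
Local Notation T := (intertwiners M1 phi).

Definition compress (A B : 'M[C]_(n2, n1)) : 'Hom('M[C]_(n2 * m), 'M[C]_(n1 * m)) :=
  linfun (mulmxr (ampl m B) \o mulmx (ampl m (adjmx A))).

Definition transport (V : {vspace 'M[C]_(n1 * m)}) : {vspace 'M[C]_(n2 * m)} :=
  (tens_full_left n2 N :&:
   \bigcap_(ab : 'I_(\dim T) * 'I_(\dim T))
     compress (vbasis T)`_ab.1 (vbasis T)`_ab.2 @^-1: V)%VS.

Lemma transportP V w :
  w \in transport V <->
  w \in tens_full_left n2 N /\
  (forall A B, A \in T -> B \in T -> ampl m (adjmx A) *m w *m ampl m B \in V).
Proof.
have compressE A B : compress A B w = ampl m (adjmx A) *m w *m ampl m B.
  by rewrite lfunE.
rewrite memv_cap; split => [/andP [tfl_w] | [tfl_w wV]].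
  rewrite memvE => /subv_bigcapP wV.
  split=> // A B TA TB; rewrite (coord_vbasis TA) (coord_vbasis TB).
  rewrite raddf_sum !linear_sum /= memv_suml // => b _.
  rewrite !mulmx_suml memv_suml // => a _.
  rewrite adjmxZ !linearZ /= -!scalemxAl !memvZ //.
  by have := wV (a, b) isT; rewrite -memvE -memv_preim compressE.
rewrite tfl_w memvE; apply/subv_bigcapP => -[a b] _.
by rewrite -memvE -memv_preim compressE wV ?vbasis_mem ?mem_nth ?size_tuple.
Qed.

End TransportDomain.

Section TransportDomainIsomorphism.
Variables (n1 n2 m : nat) (M1 : {vspace 'M[C]_n1}) (M2 : {vspace 'M[C]_n2}).
Variable N : {vspace 'M[C]_m}.
Variables (phi : 'Hom('M[C]_n1, 'M[C]_n2)) (phi' : 'Hom('M[C]_n2, 'M[C]_n1)).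
Hypotheses (vNaM1 : is_vNa M1) (vNaM2 : is_vNa M2) (vNaN : is_vNa N).
Hypothesis iso : star_iso M1 M2 phi phi'.
Let iso' := star_iso_sym vNaM1 iso.

Lemma transport_bimodule :
  resolves_identity (intertwiners M2 phi') -> forall V,
  quantum_multi_relation M1 N V -> forall a w, commutant M2 a ->
  w \in transport M1 N phi V ->
  ampl m a *m w \in transport M1 N phi V /\ w *m ampl m a \in transport M1 N phi V.
Proof.
move=> [I [P [Q [TP TQ PQ1]]]] V [_ V_bimod _] a w Ma /transportP [tfl_w wV].
have TadjP i := adjmx_intertwiner vNaM2 iso' (TP i).
have TadjQ i := adjmx_intertwiner vNaM2 iso' (TQ i).
have resolve1 : \sum_i ampl m (adjmx (P i)) *m ampl m (Q i) = 1%:M.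
  by rewrite big_amplM PQ1 ampl1.
(* Insert 1 = \sum_i P_i^* Q_i next to a: A^* a P_i^* and Q_i a B then lie in M1'. *)
split; apply/transportP; split=> [|A B TA TB].
- exact: tens_full_left_ampl_mull.
- have -> : ampl m (adjmx A) *m (ampl m a *m w) *m ampl m B =
      \sum_i ampl m (adjmx A *m a *m adjmx (P i)) *m
             (ampl m (adjmx (adjmx (Q i))) *m w *m ampl m B).
    transitivity (ampl m (adjmx A) *m ampl m a *m
      (\sum_i ampl m (adjmx (P i)) *m ampl m (Q i)) *m w *m ampl m B).
      by rewrite resolve1 mulmx1 !mulmxA.
    rewrite mulmx_sumr !mulmx_suml; apply: eq_bigr => i _.
    by rewrite adjmxK !mulmxA !amplM.
  rewrite memv_suml // => i _; apply: (V_bimod _ _ _ (wV _ _ (TadjQ i) TB)).1.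
  apply: (mul_intertwiners_commutant iso) (TadjP i).
  exact: intertwiner_mulr_commutant (adjmx_intertwiner vNaM1 iso TA) Ma.
- exact: tens_full_left_ampl_mulr.
- have -> : ampl m (adjmx A) *m (w *m ampl m a) *m ampl m B =
      \sum_i (ampl m (adjmx A) *m w *m ampl m (adjmx (P i))) *m
             ampl m (Q i *m a *m B).
    transitivity (ampl m (adjmx A) *m w *m
      (\sum_i ampl m (adjmx (P i)) *m ampl m (Q i)) *m ampl m a *m ampl m B).
      by rewrite resolve1 mulmx1 !mulmxA.
    rewrite mulmx_sumr !mulmx_suml; apply: eq_bigr => i _.
    by rewrite -!amplM !mulmxA.
  rewrite memv_suml // => i _; apply: (V_bimod _ _ _ (wV _ _ TA (TadjP i))).2.
  apply: (mul_intertwiners_commutant iso) TB.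
  exact: intertwiner_mulr_commutant (TQ i) Ma.
Qed.

Lemma qmr_transport :
  resolves_identity (intertwiners M2 phi') -> forall V,
  quantum_multi_relation M1 N V -> quantum_multi_relation M2 N (transport M1 N phi V).
Proof.
move=> resolve2 V qmrV; have [_ _ V_center] := qmrV; split.
- by apply/subvP => w /transportP [].
- exact: transport_bimodule resolve2 V qmrV.
- move=> z w [Nz zcomm] /transportP [tfl_w wV]; apply/transportP; split.
    by have [_ mulN _] := vNaN; apply: tens_full_left_tens1mx_mull.
  move=> A B TA TB.
  have -> : ampl m (adjmx A) *m (1%:M *t z *m w) *m ampl m B =
      (1%:M *t z) *m (ampl m (adjmx A) *m w *m ampl m B).
    by rewrite !mulmxA ampl_tens1mx_comm.
  by apply: V_center; [split | apply: wV].
Qed.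

Lemma transportK :
  resolves_identity (intertwiners M1 phi) -> forall V,
  quantum_multi_relation M1 N V -> transport M2 N phi' (transport M1 N phi V) = V.
Proof.
move=> [I [P [Q [TP TQ PQ1]]]] V [V_tfl V_bimod _].
have resolve1 : \sum_i ampl m (adjmx (P i)) *m ampl m (Q i) = 1%:M.
  by rewrite big_amplM PQ1 ampl1.
(* Q_i^* and P_j^* are intertwiners of phi', so each term of the expansion
   below is tested by membership in the double transport. *)
apply/vspaceP => v; apply/idP/idP => [/transportP [_ vW] | Vv].
  have -> : v = \sum_i \sum_j ampl m (adjmx (P i)) *m
      (ampl m (adjmx (adjmx (Q i))) *m v *m ampl m (adjmx (P j))) *m ampl m (Q j).
    transitivity ((\sum_i ampl m (adjmx (P i)) *m ampl m (Q i)) *m v *m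
                  (\sum_j ampl m (adjmx (P j)) *m ampl m (Q j))).
      by rewrite resolve1 mul1mx mulmx1.
    rewrite !mulmx_suml; apply: eq_bigr => i _; rewrite mulmx_sumr.
    by apply: eq_bigr => j _; rewrite adjmxK !mulmxA.
  rewrite memv_suml // => i _; rewrite memv_suml // => j _.
  have /transportP [_ W_cond] := vW _ _ (adjmx_intertwiner vNaM1 iso (TQ i))
                                      (adjmx_intertwiner vNaM1 iso (TP j)).
  exact: W_cond.
apply/transportP; split=> [|A' B' TA' TB']; first exact: (subvP V_tfl).
apply/transportP; split=> [|A B TA TB].
  exact/tens_full_left_ampl/(subvP V_tfl).
have -> : ampl m (adjmx A) *m (ampl m (adjmx A') *m v *m ampl m B') *m ampl m B =
    ampl m (adjmx A *m adjmx A') *m v *m ampl m (B' *m B).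
  by rewrite -!amplM !mulmxA.
have commA := mul_intertwiners_commutant iso
  (adjmx_intertwiner vNaM1 iso TA) (adjmx_intertwiner vNaM2 iso' TA').
have commB := mul_intertwiners_commutant iso TB' TB.
exact: (V_bimod _ _ commB (V_bimod _ _ commA Vv).1).2.
Qed.

End TransportDomainIsomorphism.

(** * Resolutions of the identity by twirling *)

Definition hsdot n (A B : 'M[C]_n) : C := \tr (A *m adjmx B).

Lemma hsdot_suml n I (r : seq I) (P : pred I) (c : I -> C) (F : I -> 'M[C]_n) B :
  hsdot (\sum_(i <- r | P i) c i *: F i) B = \sum_(i <- r | P i) c i * hsdot (F i) B.
Proof.
rewrite /hsdot mulmx_suml raddf_sum /=; apply: eq_bigr => i _.
by rewrite -scalemxAl mxtraceZ.
Qed.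

Lemma conj_hsdot n (A B : 'M[C]_n) : Num.conj (hsdot A B) = hsdot B A.
Proof.
rewrite /hsdot -[B in RHS]adjmxK -adjmxM /mxtrace rmorph_sum.
by apply: eq_bigr => i _; rewrite !mxE.
Qed.

Lemma hsdot_vec_mx n (u v : 'rV[C]_(n * n)) :
  hsdot (vec_mx u) (vec_mx v) = \sum_t u 0 t * Num.conj (v 0 t).
Proof.
transitivity (\sum_i \sum_j u 0 (mxvec_index i j) * Num.conj (v 0 (mxvec_index i j))).
  by apply: eq_bigr => i _; rewrite !mxE; apply: eq_bigr => j _; rewrite !mxE.
by rewrite pair_bigA (reindex _ (curry_mxvec_bij n n)); apply: eq_bigr => -[i j].
Qed.

Lemma orthonormal_basis n (U : {vspace 'M[C]_n}) :
  exists r (e : 'I_r -> 'M[C]_n),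
    [/\ forall k, e k \in U, forall j k, hsdot (e j) (e k) = (j == k)%:R
      & forall x, x \in U -> x = \sum_k hsdot x (e k) *: e k].
Proof.
pose B := \matrix_(k < \dim U) mxvec (vbasis U)`_k.
pose S := schmidt (row_base B).
have eqSB : (S :=: B)%MS.
  exact: eqmx_trans (eqmx_schmidt_free (row_base_free B)) (eq_row_base B).
pose e k := vec_mx (row k S).
have eE (D : 'rV[C]_(\rank B)) : \sum_k D 0 k *: e k = vec_mx (D *m S).
  by rewrite mulmx_sum_row linear_sum; apply: eq_bigr => k _; rewrite linearZ.
have eON j k : hsdot (e j) (e k) = (j == k)%:R.
  have /unitarymxP/matrixP/(_ j k) := schmidt_unitarymx (row_base B) (rank_leq_col B).
  by rewrite hsdot_vec_mx !mxE => <-; apply: eq_bigr => t _; rewrite !mxE.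
exists (\rank B), e; split=> // [k | x Ux].
  rewrite /e; have /submxP [D ->] : (row k S <= B)%MS by rewrite -eqSB row_sub.
  rewrite mulmx_sum_row linear_sum memv_suml // => l _.
  by rewrite linearZ memvZ //= rowK mxvecK vbasis_mem ?mem_nth ?size_tuple.
have /submxP [D Dx] : (mxvec x <= S)%MS.
  rewrite eqSB; apply/submxP; exists (\row_l coord (vbasis U) l x).
  rewrite mulmx_sum_row {1}(coord_vbasis Ux) linear_sum; apply: eq_bigr => l _.
  by rewrite linearZ rowK mxE.
have xE : x = \sum_k D 0 k *: e k by rewrite eE -Dx mxvecK.
rewrite {1}xE; apply: eq_bigr => k _; congr (_ *: _).
rewrite xE hsdot_suml (bigD1 k) //= eON eqxx mulr1 big1 ?addr0 // => j njk.
by rewrite eON (negbTE njk) mulr0.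
Qed.

Lemma mulmx_delta_entry m1 m2 m3 (A : 'M[C]_(m1, m2)) p q (w : 'cV[C]_m3) i :
  (A *m (delta_mx p q *m w)) i 0 = A i p * w q 0.
Proof.
have -> : delta_mx p q *m w = w q 0 *: delta_mx p 0.
  apply/colP => l; rewrite !mxE (bigD1 q) //= big1 ?addr0 => [|s nsq].
    by rewrite mxE !eqxx !andbT mulrC.
  by rewrite mxE (negbTE nsq) andbF mul0r.
by rewrite -scalemxAr -colE !mxE mulrC.
Qed.

Lemma rownorm_eq0 k (u : 'rV[C]_k) : (u *m adjmx u) 0 0 = 0 -> u = 0.
Proof.
rewrite mxE => u0; apply/rowP => s; apply/eqP; rewrite mxE -mul_conjC_eq0.
have nonneg t : 0 <= u 0 t * adjmx u t 0 by rewrite !mxE mul_conjC_ge0.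
by have := psumr_eq0P (fun t _ => nonneg t) u0 (i := s) isT; rewrite !mxE => ->.
Qed.

Section Twirling.
Variables (n1 n2 : nat) (M1 : {vspace 'M[C]_n1}) (phi : 'Hom('M[C]_n1, 'M[C]_n2)).
Hypotheses (vNaM1 : is_vNa M1) (phiM : {in M1 &, {morph phi : x y / x *m y}}).
Hypotheses (phi_adj : {in M1, {morph phi : x / adjmx x}}).
Hypothesis phi_inj : {in M1 &, injective phi}.
Variables (r : nat) (e : 'I_r -> 'M[C]_n1).
Hypothesis eM : forall k, e k \in M1.
Hypothesis eON : forall j k, hsdot (e j) (e k) = (j == k)%:R.
Hypothesis eE : forall x, x \in M1 -> x = \sum_k hsdot x (e k) *: e k.

Definition twirl (X : 'M[C]_(n2, n1)) : 'M[C]_(n2, n1) :=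
  \sum_k phi (e k) *m X *m adjmx (e k).

(* The coefficients of a *m e_k and of adjmx a *m e_j on the basis are
   conjugate-transposed to each other, which moves a across the twirl. *)
Lemma twirl_intertwines X : twirl X \in intertwiners M1 phi.
Proof.
apply/intertwinersP => a M1a; have [_ mulM1 adjM1] := vNaM1.
have -> : phi a *m twirl X = \sum_k \sum_j
    hsdot (a *m e k) (e j) *: (phi (e j) *m X *m adjmx (e k)).
  rewrite /twirl mulmx_sumr; apply: eq_bigr => k _.
  rewrite !mulmxA -phiM // {1}(eE (mulM1 _ _ M1a (eM k))) linear_sum !mulmx_suml.
  by apply: eq_bigr => j _; rewrite linearZ -!scalemxAl.
have -> : twirl X *m a = \sum_j \sum_k
    Num.conj (hsdot (adjmx a *m e j) (e k)) *: (phi (e j) *m X *m adjmx (e k)).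
  rewrite /twirl mulmx_suml; apply: eq_bigr => j _.
  rewrite -[phi (e j) *m X *m _ *m a]mulmxA.
  rewrite -[X in adjmx (e j) *m X](adjmxK a) -adjmxM.
  rewrite {1}(eE (mulM1 _ _ (adjM1 _ M1a) (eM j))) raddf_sum mulmx_sumr.
  by apply: eq_bigr => k _ /=; rewrite adjmxZ -scalemxAr.
rewrite exchange_big; apply: eq_bigr => j _; apply: eq_bigr => k _.
congr (_ *: _); rewrite conj_hsdot /hsdot adjmxM adjmxK !mulmxA.
by rewrite mxtrace_mulC mulmxA.
Qed.

Lemma twirl_nondegenerate (c : 'cV[C]_n1) :
  (forall p q, twirl (delta_mx p q) *m c = 0) -> c = 0.
Proof.
move=> twirl_c.
have ec0 k : adjmx (e k) *m c = 0.
  apply/colP => q; rewrite [RHS]mxE.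
  pose y := \sum_j (adjmx (e j) *m c) q 0 *: e j.
  have M1y : y \in M1 by rewrite memv_suml // => j _; rewrite memvZ.
  have phiy : phi y = 0.
    apply/matrixP => i p; rewrite [RHS]mxE.
    transitivity ((twirl (delta_mx p q) *m c) i 0); last by rewrite twirl_c mxE.
    rewrite /y /twirl linear_sum mulmx_suml !summxE; apply: eq_bigr => j _.
    by rewrite linearZ /= mxE -!mulmxA mulmx_delta_entry [LHS]mulrC.
  have y0 : y = 0 by apply: phi_inj; rewrite ?mem0v ?phiy ?linear0.
  have := congr1 (fun A => hsdot A (e k)) y0.
  rewrite /= /y hsdot_suml (bigD1 k) //= eON eqxx.
  rewrite mulr1 big1 ?addr0 => [->|j njk]; last by rewrite eON (negbTE njk) mulr0.
  by rewrite /hsdot mul0mx linear0.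
have [M1_1 _ _] := vNaM1.
rewrite -[c]mul1mx -adjmx1 (eE M1_1) raddf_sum mulmx_suml big1 // => k _ /=.
by rewrite adjmxZ -scalemxAl ec0 scaler0.
Qed.

Definition twirl_gram : 'M[C]_n1 :=
  \sum_(t : 'I_n2 * 'I_n1)
    adjmx (twirl (delta_mx t.1 t.2)) *m twirl (delta_mx t.1 t.2).

(* A kernel vector v of the Gram operator has v *m adjmx T = 0 for every twirl T
   of a matrix unit, which twirl_nondegenerate rules out. *)
Lemma twirl_gram_unit : twirl_gram \in unitmx.
Proof.
rewrite unitmxE unitfE; apply/negP => /det0P [v nv v0].
pose w t := v *m adjmx (twirl (delta_mx t.1 t.2)).
have w0 t : w t = 0.
  have nonneg s : 0 <= (w s *m adjmx (w s)) 0 0.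
    by rewrite mxE sumr_ge0 // => l _; rewrite !mxE mul_conjC_ge0.
  have sum0 : \sum_s (w s *m adjmx (w s)) 0 0 = 0.
    transitivity ((v *m twirl_gram *m adjmx v) 0 0); last by rewrite v0 mul0mx mxE.
    rewrite /twirl_gram mulmx_sumr mulmx_suml summxE; apply: eq_bigr => s _.
    by rewrite /w adjmxM adjmxK !mulmxA.
  exact/rownorm_eq0/(psumr_eq0P (fun s _ => nonneg s) sum0 (i := t)).
have /(congr1 (@adjmx R _ _)) : adjmx v = 0.
  apply: twirl_nondegenerate => p q; have := w0 (p, q).
  by move/(congr1 (@adjmx R _ _)); rewrite adjmxM adjmxK raddf0.
by rewrite adjmxK raddf0 => v_eq0; rewrite v_eq0 eqxx in nv.
Qed.

Lemma twirl_gram_comm x : x \in M1 -> twirl_gram *m x = x *m twirl_gram.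
Proof.
move=> M1x; rewrite /twirl_gram mulmx_suml mulmx_sumr; apply: eq_bigr => t _.
have Tint := twirl_intertwines (delta_mx t.1 t.2).
rewrite -mulmxA (intertwinersP _ _ _ Tint) // mulmxA.
by rewrite (intertwiner_adjmx_mul vNaM1 phi_adj Tint) // mulmxA.
Qed.

Lemma twirl_resolve_identity : resolves_identity (intertwiners M1 phi).
Proof.
have comm_inv x : x \in M1 -> invmx twirl_gram *m x = x *m invmx twirl_gram.
  move=> M1x; rewrite -[LHS](mulmxK twirl_gram_unit) -[_ *m x *m _]mulmxA.
  by rewrite -twirl_gram_comm // mulmxA mulVmx ?twirl_gram_unit // mul1mx.
have adj_gram : adjmx twirl_gram = twirl_gram.
  by rewrite /twirl_gram raddf_sum; apply: eq_bigr => t _ /=; rewrite adjmxM adjmxK.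
have adj_inv : adjmx (invmx twirl_gram) = invmx twirl_gram.
  rewrite -[LHS]mulmx1 -(mulmxV twirl_gram_unit) mulmxA -[X in _ *m X *m _]adj_gram.
  by rewrite -adjmxM mulmxV ?twirl_gram_unit // adjmx1 mul1mx.
(* P_t := T_t G^-1 and Q_t := T_t, with G^-1 self-adjoint and in M1'. *)
exists ('I_n2 * 'I_n1)%type, (fun t => twirl (delta_mx t.1 t.2) *m invmx twirl_gram).
exists (fun t => twirl (delta_mx t.1 t.2)); split=> [t | t |].
- have /intertwinersP Tint := twirl_intertwines (delta_mx t.1 t.2).
  by apply/intertwinersP => x M1x; rewrite -mulmxA comm_inv // !mulmxA Tint.
- exact: twirl_intertwines.
- rewrite -(mulVmx twirl_gram_unit) /twirl_gram mulmx_sumr; apply: eq_bigr => t _.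
  by rewrite adjmxM adj_inv mulmxA.
Qed.

End Twirling.

Lemma intertwiners_resolve_identity n1 n2 (M1 : {vspace 'M[C]_n1})
    (M2 : {vspace 'M[C]_n2}) phi phi' :
  is_vNa M1 -> star_iso M1 M2 phi phi' -> resolves_identity (intertwiners M1 phi).
Proof.
move=> vNaM1 iso; have [r [e [eM eON eE]]] := orthonormal_basis M1.
apply: (twirl_resolve_identity vNaM1 (star_isoM iso) (star_iso_adj iso)) eM eON eE.
exact: can_in_inj (star_isoK iso).
Qed.

Lemma qmr_domain_bij n1 n2 m (M1 : {vspace 'M[C]_n1}) (M2 : {vspace 'M[C]_n2})
    (N : {vspace 'M[C]_m}) :
  is_vNa M1 -> is_vNa M2 -> is_vNa N -> vNa_iso M1 M2 ->
  exists F : {V | quantum_multi_relation M1 N V} ->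
             {W | quantum_multi_relation M2 N W}, bijective F.
Proof.
move=> vNaM1 vNaM2 vNaN /(vNa_iso_star_iso vNaM1) [phi [phi' iso]].
have iso' := star_iso_sym vNaM1 iso.
have resolve1 := intertwiners_resolve_identity vNaM1 iso.
have resolve2 := intertwiners_resolve_identity vNaM2 iso'.
apply: (exists_bij_sig (f := transport M1 N phi) (g := transport M2 N phi')).
- exact: qmr_transport vNaM1 vNaM2 vNaN iso resolve2.
- exact: qmr_transport vNaM2 vNaM1 vNaN iso' resolve1.
- exact: transportK vNaM1 vNaM2 iso resolve1.
- exact: transportK vNaM2 vNaM1 iso' resolve2.
Qed.

End QuantumMultiRelations.

Unset Implicit Arguments.

Theorem theorem4p3 (R : realType) (n1 n2 m1 m2 : nat)
  (M1 : {vspace 'M[R[i]]_n1}) (M2 : {vspace 'M[R[i]]_n2})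
  (N1 : {vspace 'M[R[i]]_m1}) (N2 : {vspace 'M[R[i]]_m2}) :
  is_vNa M1 -> is_vNa M2 -> is_vNa N1 -> is_vNa N2 ->
  vNa_iso M1 M2 -> vNa_iso N1 N2 ->
  exists F : {V : {vspace 'M[R[i]]_(n1 * m1)} | quantum_multi_relation M1 N1 V} ->
             {V : {vspace 'M[R[i]]_(n2 * m2)} | quantum_multi_relation M2 N2 V},
    bijective F.
Proof.
move=> vNaM1 vNaM2 vNaN1 vNaN2 isoM isoN.
have [F bijF] := qmr_domain_bij vNaM1 vNaM2 vNaN1 isoM.
have [G bijG] := qmr_codomain_bij M2 vNaN1 vNaN2 isoN.
by exists (G \o F); apply: bij_comp.
Qed.
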